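(* Let $M_G$ be a connected mixed graph. Then $\operatorname{rank}N(M_G)=3$ if and only if $T_{M_G}$ is either a mixed triangle, or a mixed graph whose underlying graph is $K_4$ and among whose three mixed $4$-cycles two are positive and one is semi-negative.
   Context: A mixed graph $M_G$ is obtained from a finite simple graph $G$ by orienting the edges of some subset of $E(G)$; it is connected if $G$ is. With $\omega=\frac{1+\mathbf{i}\sqrt3}{2}$, $N(M_G)=(n_{st})$ has entry $\omega$ for an arc from $u_s$ to $u_t$, $\bar\omega$ for an arc from $u_t$ to $u_s$, $1$ for an undirected edge, $0$ otherwise. A mixed cycle is a mixed subgraph whose underlying graph is a cycle $v_1\cdots v_lv_1$, with weight $n_{12}\cdots n_{l1}$; positive means weight $1$, semi-negative means weight $-\omega$ or $-\bar\omega$. A mixed triangle is a mixed graph whose underlying graph is $K_3$. Switching: $\mathbb{T}_6=\{1,-1,\omega,\bar\omega,-\omega,-\bar\omega\}$; given a partition $V=\bigcup_{j\in\mathbb{T}_6}V_j$ into possibly empty sets, an edge or arc $xy$ has type $(j,k)$ if $x\in V_j,y\in V_k$ (arcs directed from $x$ to $y$); the partition is admissible if every undirected edge has type $(j,j)$ or $(j,\omega j)$ and every arc has type $(j,j)$, $(j,\bar\omega j)$ or $(j,-\omega j)$ for some $j$; a three-way switching replaces each undirected edge of type $(j,\omega j)$ by an arc from $V_j$ to $V_{\omega j}$, each arc of type $(j,\bar\omega j)$ by an undirected edge, and reverses each arc of type $(j,-\omega j)$; two mixed graphs on the same vertex set are switching equivalent if one is obtained from the other by three-way switchings and reversing all arcs.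 Two vertices $u,v$ of $M_G$ are twins if $M_G$ is switching equivalent to a mixed graph $M'_G$ with $N(M'_G)_{uj}=N(M'_G)_{vj}$ for all vertices $j$. $T_{M_G}$ is the induced mixed subgraph obtained from $M_G$ by deleting all but one vertex from every set of twins. *)

From HB Require Import structures.
From mathcomp Require Import all_boot all_order all_algebra all_field.
From Stdlib Require Import Relation_Operators.
Set Implicit Arguments. Unset Strict Implicit. Unset Printing Implicit Defensive.
Import Order.TTheory GRing.Theory Num.Theory.
Local Open Scope ring_scope.

Definition omega : algC := (1 + 'i * sqrtC 3) / 2.
Definition omegab : algC := (1 - 'i * sqrtC 3) / 2.

Definition T6 : seq algC := [:: 1; -1; omega; omegab; - omega; - omegab].

(* A mixed graph on the vertex set 'I_n: underlying simple graph [ug] and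
   the set of arcs [arc] (arc x y = arc directed from x to y). *)
Record mixed_graph (n : nat) := MixedGraph { ug : rel 'I_n ; arc : rel 'I_n }.

Definition mixed_wf n (M : mixed_graph n) : Prop :=
  [/\ symmetric (ug M), irreflexive (ug M),
      (forall x y, arc M x y -> ug M x y) &
      (forall x y, ~~ (arc M x y && arc M y x))].

Definition uedge n (M : mixed_graph n) (x y : 'I_n) : bool :=
  [&& ug M x y, ~~ arc M x y & ~~ arc M y x].

Definition Nentry n (M : mixed_graph n) (s t : 'I_n) : algC :=
  if arc M s t then omega else if arc M t s then omegab
  else if ug M s t then 1 else 0.

Definition Nmx n (M : mixed_graph n) : 'M[algC]_n := \matrix_(s, t) Nentry M s t.

Definition mixed_connected n (M : mixed_graph n) : Prop :=
  forall x y : 'I_n, connect (ug M) x y.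

(* a partition of V into the classes V_j, j in T6, given by the label f x = j *)
Definition admissible n (M : mixed_graph n) (f : 'I_n -> algC) : Prop :=
  [/\ (forall x, f x \in T6),
      (forall x y, uedge M x y ->
          [|| f y == f x, f y == omega * f x | f x == omega * f y]) &
      (forall x y, arc M x y ->
          [|| f y == f x, f y == omegab * f x | f y == - omega * f x])].

Definition switched_arc n (M : mixed_graph n) (f : 'I_n -> algC) (x y : 'I_n) : bool :=
  [|| uedge M x y && (f y == omega * f x),
      arc M x y && (f y == f x)
    | arc M y x && (f x == - omega * f y)].

Definition switch_step n (M M' : mixed_graph n) : Prop :=
  (exists f, admissible M f /\
     forall x y, ug M' x y = ug M x y /\ arc M' x y = switched_arc M f x y)
  \/ (forall x y, ug M' x y = ug M x y /\ arc M' x y = arc M y x).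

Definition switch_equiv n : mixed_graph n -> mixed_graph n -> Prop :=
  @clos_refl_trans (mixed_graph n) (@switch_step n).

Definition twins n (M : mixed_graph n) (u v : 'I_n) : Prop :=
  exists M', switch_equiv M M' /\ forall j, Nentry M' u j = Nentry M' v j.

(* S keeps exactly one vertex from every set of twins; T_{M_G} is the
   mixed subgraph of M induced on S *)
Definition twin_reps n (M : mixed_graph n) (S : {set 'I_n}) : Prop :=
  (forall v, exists2 u, u \in S & twins M u v) /\
  (forall u v, u \in S -> v \in S -> twins M u v -> u = v).

Definition cycle4_weight n (M : mixed_graph n) (a b c d : 'I_n) : algC :=
  Nentry M a b * Nentry M b c * Nentry M c d * Nentry M d a.

Definition positive_w (w : algC) : bool := w == 1.
Definition seminegative_w (w : algC) : bool := (w == - omega) || (w == - omegab).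

Definition induced_mixed_triangle n (M : mixed_graph n) (S : {set 'I_n}) : Prop :=
  #|S| = 3 /\ {in S &, forall x y, x != y -> ug M x y}.

Definition induced_K4_2pos_1semineg n (M : mixed_graph n) (S : {set 'I_n}) : Prop :=
  #|S| = 4 /\ {in S &, forall x y, x != y -> ug M x y} /\
  exists a b c d, S = [set a; b; c; d] /\
    let ws := [:: cycle4_weight M a b c d; cycle4_weight M a b d c;
                  cycle4_weight M a c b d] in
    count positive_w ws = 2%N /\ count seminegative_w ws = 1%N.

(* Rank 3 forces a nonsingular principal 3x3 block H of N on some vertices a, b, c
   whose rows span all rows; then det H * N(v, w) = r_v adj(H) r_w^* where r_v lists
   the entries of v towards a, b, c.  A three-way switching acts on N as a diagonal
   congruence by elements of T_6 and reversing all arcs conjugates N, so twins are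
   exactly the vertices with T_6-proportional rows, and a, b, c can be taken among
   the representatives.  All entries lie in the Eisenstein integers, and the finitely
   many possible blocks and rows are examined by computation: a nonsingular block is
   a triangle; the row of any further representative is isotropic for adj(H) and not
   proportional to a row of H, which forces a K4 with two positive and one
   semi-negative 4-cycle; and two such representatives coincide.  Conversely, on such
   a triangle or K4 the block is nonsingular and, in the K4 case, the isotropic fourth
   row is a combination of the other three. *)

From Stdlib Require Import BinInt Relation_Operators.
From HB Require Import structures.
From mathcomp Require Import all_boot all_order all_algebra all_field.
From mathcomp Require Import ssrZ ring.
Set Implicit Arguments. Unset Strict Implicit. Unset Printing Implicit Defensive.
Import Order.TTheory GRing.Theory Num.Theory.
Local Open Scope ring_scope.

(** * Eisenstein integers *)

Lemma omega_sqr : omega ^+ 2 = omega - 1.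
Proof.
rewrite /omega; set t := 'i * sqrtC 3.
have t2 : t ^+ 2 = -3 by rewrite exprMn sqrCi sqrtCK mulN1r.
apply/eqP; rewrite -subr_eq0; apply/eqP.
have -> : ((1 + t) / 2) ^+ 2 - ((1 + t) / 2 - 1) = (t ^+ 2 + 3) / 4 by field.
by rewrite t2 addNr mul0r.
Qed.

Lemma omegabE : omegab = 1 - omega.
Proof. by rewrite /omegab /omega; field. Qed.

Lemma conj_omega : omega^* = omegab.
Proof.
have s3 : (sqrtC 3)^* = sqrtC 3 :> algC by rewrite conj_Creal // realE sqrtC_ge0 ler0n.
rewrite /omega /omegab rmorphM rmorphD rmorphM /= conjCi rmorph1 s3 fmorphV rmorph_nat.
by rewrite mulNr.
Qed.

(* The pair (a, b) stands for a + b omega.  Entries of N and elements of T6 are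
   Eisenstein integers, so finite case analyses on them are decided by computation. *)
Definition eis := (Z * Z)%type.
HB.instance Definition _ := GRing.Zmodule.copy eis (Z * Z)%type.

Definition eis_mul (x y : eis) : eis :=
  (x.1 * y.1 - x.2 * y.2, x.1 * y.2 + x.2 * y.1 + x.2 * y.2).
Definition eis_conj (x : eis) : eis := (x.1 + x.2, - x.2).

Definition intC (z : Z) : algC := (int_of_Z z)%:~R.
Definition eisC (x : eis) : algC := intC x.1 + intC x.2 * omega.

Lemma intCD a b : intC (a + b) = intC a + intC b.
Proof. by rewrite /intC (rmorphD int_of_Z) intrD. Qed.
Lemma intCN a : intC (- a) = - intC a.
Proof. by rewrite /intC (rmorphN int_of_Z) intrN. Qed.
Lemma intCM a b : intC (a * b) = intC a * intC b.
Proof. by rewrite /intC (rmorphM int_of_Z) intrM. Qed.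
Lemma intC0 : intC 0 = 0. Proof. by []. Qed.
Lemma intC1 : intC 1 = 1. Proof. by []. Qed.

Lemma intC_inj : injective intC.
Proof. by move=> x y /eqP; rewrite /intC eqr_int => /eqP /(can_inj int_of_ZK). Qed.

Lemma conj_intC z : (intC z)^* = intC z.
Proof. exact: rmorph_int. Qed.

Lemma eisC_is_zmod_morphism : zmod_morphism eisC.
Proof. by move=> [a b] [c d]; rewrite /eisC /= !(intCD, intCN); ring. Qed.
HB.instance Definition _ := GRing.isZmodMorphism.Build eis algC eisC eisC_is_zmod_morphism.

Lemma eisC_mul x y : eisC (eis_mul x y) = eisC x * eisC y.
Proof.
rewrite /eisC /= !(intCD, intCN, intCM).
set A := intC x.1; set B := intC x.2; set C := intC y.1; set D := intC y.2.
have -> : (A + B * omega) * (C + D * omega) = A * C + (A * D + B * C) * omega + B * D * omega ^+ 2.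
  by ring.
by rewrite omega_sqr; ring.
Qed.

Lemma eisC_conj x : eisC (eis_conj x) = (eisC x)^*.
Proof.
by rewrite /eisC /= rmorphD rmorphM /= !conj_intC conj_omega omegabE intCD intCN; ring.
Qed.

Lemma omega2_sub1_neq0 : 2 * omega - 1 != 0.
Proof.
apply/eqP => h; have : (2 * omega - 1) ^+ 2 = -3.
  by transitivity (4 * omega ^+ 2 - 4 * omega + 1); [ring | rewrite omega_sqr; ring].
by rewrite h expr0n /= => /eqP; rewrite eq_sym oppr_eq0 pnatr_eq0.
Qed.

Lemma eisC_eq0 x : (eisC x == 0) = (x == 0).
Proof.
apply/eqP/eqP => [|->]; last by rewrite /eisC /= intC0 mul0r addr0.
case: x => a b /= h0.
have hc := congr1 Num.conj h0; rewrite -eisC_conj rmorph0 in hc.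
have /eqP : intC b * (2 * omega - 1) = 0.
  transitivity (eisC (a, b) - eisC (eis_conj (a, b))); last by rewrite h0 hc subr0.
  by rewrite /eisC /= intCD intCN; ring.
rewrite mulf_eq0 (negPf omega2_sub1_neq0) orbF -intC0 => /eqP/intC_inj b0.
move: h0; rewrite /eisC /= b0 intC0 mul0r addr0 -intC0 => /intC_inj a0.
by rewrite a0.
Qed.

Lemma eisC_inj : injective eisC.
Proof.
move=> x y exy; apply/eqP; rewrite -subr_eq0 -eisC_eq0.
by rewrite raddfB /= exy subrr.
Qed.

Lemma eisC_eq x y : (eisC x == eisC y) = (x == y).
Proof. exact: (inj_eq eisC_inj). Qed.

Definition eis_one : eis := (1, 0).

Lemma eisC_one : eisC eis_one = 1.
Proof. by rewrite /eisC /= intC1 intC0 mul0r addr0. Qed.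

Lemma eis_mulA : associative eis_mul.
Proof. by move=> x y z; apply: eisC_inj; rewrite !eisC_mul mulrA. Qed.
Lemma eis_mulC : commutative eis_mul.
Proof. by move=> x y; apply: eisC_inj; rewrite !eisC_mul mulrC. Qed.
Lemma eis_mul1 : left_id eis_one eis_mul.
Proof. by move=> x; apply: eisC_inj; rewrite eisC_mul eisC_one mul1r. Qed.
Lemma eis_mulDl : left_distributive eis_mul +%R.
Proof. by move=> x y z; apply: eisC_inj; rewrite eisC_mul !raddfD /= !eisC_mul mulrDl. Qed.
Lemma eis_one_neq0 : eis_one != 0.
Proof. by []. Qed.

HB.instance Definition _ := GRing.Zmodule_isComNzRing.Build eis
  eis_mulA eis_mulC eis_mul1 eis_mulDl eis_one_neq0.

Lemma eisC_is_monoid_morphism : monoid_morphism eisC.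
Proof. by split; [exact: eisC_one | exact: eisC_mul]. Qed.
HB.instance Definition _ := GRing.isMonoidMorphism.Build eis algC eisC eisC_is_monoid_morphism.

Definition eis_omega : eis := (0, 1).

Definition eis_omegab : eis := 1 - eis_omega.

Lemma eisC_omega : eisC eis_omega = omega.
Proof. by rewrite /eisC /= intC1 intC0 mul1r add0r. Qed.

Lemma eisC_omegab : eisC eis_omegab = omegab.
Proof. by rewrite rmorphB rmorph1 /= eisC_omega omegabE. Qed.

Definition T6_eis : seq eis := [:: 1; -1; eis_omega; eis_omegab; - eis_omega; - eis_omegab].

Lemma T6E : T6 = map eisC T6_eis.
Proof. by rewrite /T6 /= !rmorphN /= rmorph1 eisC_omega eisC_omegab. Qed.

Lemma T6_eisP a : a \in T6 -> exists2 t, t \in T6_eis & a = eisC t.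
Proof. by rewrite T6E => /mapP. Qed.

Lemma eisC_T6 t : t \in T6_eis -> eisC t \in T6.
Proof. by rewrite T6E; apply: map_f. Qed.

Lemma T6e_closed : all (fun s => [&& eis_conj s \in T6_eis, s * eis_conj s == 1
                                   & all (fun t => s * t \in T6_eis) T6_eis]) T6_eis.
Proof. by vm_compute. Qed.

Lemma T6_mul a b : a \in T6 -> b \in T6 -> a * b \in T6.
Proof.
move=> /T6_eisP[s sT ->] /T6_eisP[t tT ->]; rewrite -rmorphM eisC_T6 //.
by have /allP/(_ s sT)/and3P[_ _ /allP->] := T6e_closed.
Qed.

Lemma T6_conj a : a \in T6 -> a^* \in T6.
Proof.
move=> /T6_eisP[s sT ->]; rewrite -eisC_conj eisC_T6 //.
by have /allP/(_ s sT)/and3P[] := T6e_closed.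
Qed.

Lemma T6_mul_conj a : a \in T6 -> a * a^* = 1.
Proof.
move=> /T6_eisP[s sT ->]; rewrite -eisC_conj -rmorphM.
by have /allP/(_ s sT)/and3P[_ /eqP-> _] := T6e_closed; rewrite rmorph1.
Qed.

Lemma T6_conj_mul a : a \in T6 -> a^* * a = 1.
Proof. by rewrite mulrC; apply: T6_mul_conj. Qed.

Lemma T6_neq0 a : a \in T6 -> a != 0.
Proof.
move/T6_mul_conj => h; apply/eqP => a0.
by move: h; rewrite a0 mul0r => /eqP; rewrite eq_sym oner_eq0.
Qed.

Lemma one_T6 : 1 \in T6.
Proof. by rewrite inE eqxx. Qed.

(** * Three-by-three determinants and adjugate forms *)

Definition tri (T : Type) (a b c : T) (i : nat) : T :=
  match i with 0 => a | 1 => b | _ => c end%N.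

Definition sum3 (V : nmodType) (F : nat -> V) : V := F 0%N + F 1%N + F 2%N.

Lemma sum_ord3 (V : nmodType) (F : nat -> V) : \sum_(i < 3) F i = sum3 F.
Proof. by rewrite !big_ord_recr big_ord0 /= add0r. Qed.

Section ThreeByThree.
Variable R : comRingType.
Implicit Types (h : nat -> nat -> R) (c d x : nat -> R).

Definition others (i : nat) : nat * nat :=
  match i with 0 => (1, 2) | 1 => (0, 2) | _ => (0, 1) end%N.

Definition cofactor3 h (i j : nat) : R :=
  let (i0, i1) := others i in let (j0, j1) := others j in
  let m := h i0 j0 * h i1 j1 - h i0 j1 * h i1 j0 in
  if odd (i + j) then - m else m.

Definition det3 h : R := sum3 (fun j => h 0%N j * cofactor3 h 0%N j).

(* [form3 h c d] is c adj(h) d^T. *)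
Definition form3 h c d : R := sum3 (fun i => sum3 (fun j => c i * cofactor3 h j i * d j)).

Lemma eq_det3 h h' : h =2 h' -> det3 h = det3 h'.
Proof. by move=> e; rewrite /det3 /sum3 /cofactor3 /= !e. Qed.

Lemma eq_form3 h h' c c' d d' : h =2 h' -> c =1 c' -> d =1 d' -> form3 h c d = form3 h' c' d'.
Proof. by move=> eh ec ed; rewrite /form3 /sum3 /cofactor3 /= !eh !ec !ed. Qed.

Lemma det_mx33 h : \det (\matrix_(i < 3, j < 3) h i j) = det3 h.
Proof.
rewrite (expand_det_row _ 0) !big_ord_recr big_ord0 /= add0r /cofactor.
rewrite !(expand_det_row _ 0) !big_ord_recr !big_ord0 /= !add0r /cofactor.
by rewrite !det_mx11 !mxE /= /det3 /sum3 /cofactor3 /=; ring.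
Qed.

Lemma det3_scale h (d e : nat -> R) :
  det3 (fun i j => d i * e j * h i j) =
  d 0%N * d 1%N * d 2%N * (e 0%N * e 1%N * e 2%N) * det3 h.
Proof. by rewrite /det3 /sum3 /cofactor3 /=; ring. Qed.

Lemma form3_comb h x c d : (forall k, c k = sum3 (fun i => x i * h i k)) ->
  form3 h c d = det3 h * sum3 (fun i => x i * d i).
Proof. by move=> hc; rewrite /form3 /det3 /sum3 /cofactor3 /= !hc /sum3; ring. Qed.

Lemma form3_scalel h (l : R) c c' d : (forall k, (k < 3)%N -> c k = l * c' k) ->
  form3 h c d = l * form3 h c' d.
Proof. by move=> e; rewrite /form3 /sum3 /= !e //; ring. Qed.

End ThreeByThree.

Section Morphism.
Variables (R S : comRingType) (f : {rmorphism R -> S}).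
Implicit Types (h : nat -> nat -> R) (c d : nat -> R).

Lemma rmorph_det3 h :
  f (det3 h) = det3 (fun i j => f (h i j)).
Proof. by rewrite /det3 /sum3 /cofactor3 /= !(rmorphD, rmorphN, rmorphB, rmorphM). Qed.

Lemma rmorph_form3 h c d :
  f (form3 h c d) = form3 (fun i j => f (h i j)) (fun i => f (c i)) (fun i => f (d i)).
Proof. by rewrite /form3 /sum3 /cofactor3 /= !(rmorphD, rmorphN, rmorphB, rmorphM). Qed.

End Morphism.

Section Cramer.
Variable F : fieldType.
Implicit Types (h : nat -> nat -> F) (c d : nat -> F).

Definition cramer3 h c (i : nat) : F := sum3 (fun j => c j * cofactor3 h i j) / det3 h.

Lemma cramer3_comb h c k : det3 h != 0 -> (k < 3)%N ->
  sum3 (fun i => cramer3 h c i * h i k) = c k.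
Proof.
move=> hD hk; apply: (mulfI hD); rewrite /cramer3 /sum3.
have -> : forall a b e : F,
    det3 h * (a / det3 h * h 0%N k + b / det3 h * h 1%N k + e / det3 h * h 2%N k)
    = a * h 0%N k + b * h 1%N k + e * h 2%N k by move=> a b e; field.
by case: k hk => [|[|[|]]] // _; rewrite /det3 /sum3 /cofactor3 /=; ring.
Qed.

Lemma cramer3_form h c d : det3 h != 0 ->
  sum3 (fun i => cramer3 h c i * d i) = form3 h c d / det3 h.
Proof. by move=> hD; rewrite /cramer3 /form3 /sum3; field. Qed.

End Cramer.

(** * Entries of N and three-way switchings *)

Definition edge_values : seq eis := [:: 1; eis_omega; eis_omegab].
Definition entry_values : seq eis := 0 :: edge_values.

Definition entry_eis (u p q : bool) : eis :=
  if p then eis_omega else if q then eis_omegab else if u then 1 else 0.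

Definition Neis n (M : mixed_graph n) (x y : 'I_n) : eis :=
  entry_eis (ug M x y) (arc M x y) (arc M y x).

Definition bools := [:: true; false].

(* The data of a pair (x, y) seen locally: u = ug M x y, p = arc M x y, q = arc M y x,
   and the labels fx, fy of x and y in a partition. *)
Definition local_graph (u p q : bool) : bool := [&& p ==> u, q ==> u & ~~ (p && q)].

Definition local_admissible (u p q : bool) (fx fy : eis) : bool :=
  ([&& u, ~~ p & ~~ q] ==> [|| fy == fx, fy == eis_omega * fx | fx == eis_omega * fy]) &&
  (p ==> [|| fy == fx, fy == eis_omegab * fx | fy == - eis_omega * fx]).

Definition local_switched_arc (u p q : bool) (fx fy : eis) : bool :=
  [|| [&& u, ~~ p & ~~ q] && (fy == eis_omega * fx), p && (fy == fx)
    | q && (fx == - eis_omega * fy)].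

Definition all_local (P : bool -> bool -> bool -> eis -> eis -> bool) : bool :=
  all (fun u => all (fun p => all (fun q => all (fun fx => all (fun fy =>
    local_graph u p q ==> P u p q fx fy) T6_eis) T6_eis) bools) bools) bools.

Section Entries.
Variables (n : nat) (M : mixed_graph n).

Lemma NentryE x y : Nentry M x y = eisC (Neis M x y).
Proof.
rewrite /Nentry /Neis /entry_eis; case: (arc M x y); first by rewrite eisC_omega.
by case: (arc M y x); [rewrite eisC_omegab | case: (ug M x y); rewrite ?rmorph1 ?rmorph0].
Qed.

Lemma Neis_values x y : Neis M x y \in entry_values.
Proof. by rewrite /Neis /entry_eis; case: (arc M x y); case: (arc M y x); case: (ug M x y). Qed.

Hypothesis wf : mixed_wf M.

Lemma ug_sym x y : ug M y x = ug M x y.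
Proof. by case: wf => s _ _ _; rewrite s. Qed.

Lemma ug_irr x : ug M x x = false.
Proof. by case: wf => _ i _ _; rewrite i. Qed.

Lemma arc_ug x y : arc M x y -> ug M x y.
Proof. by case: wf => _ _ a _; apply: a. Qed.

Lemma arc_asym x y : ~~ (arc M x y && arc M y x).
Proof. by case: wf => _ _ _ a; apply: a. Qed.

Lemma arc_ug_imp x y : arc M x y ==> ug M x y.
Proof. by apply/implyP/arc_ug. Qed.

Lemma local_graph_of x y : local_graph (ug M x y) (arc M x y) (arc M y x).
Proof. by rewrite /local_graph arc_ug_imp -(ug_sym x y) arc_ug_imp arc_asym. Qed.

Lemma ug_neq x y : ug M x y -> x != y.
Proof. by apply: contraTneq => ->; rewrite ug_irr. Qed.

Lemma Neis_sym x y : Neis M y x = eis_conj (Neis M x y).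
Proof.
move: (arc_asym x y) (arc_ug_imp x y) (arc_ug_imp y x).
by rewrite /Neis !(ug_sym x y); case: (arc M x y); case: (arc M y x); case: (ug M x y).
Qed.

Lemma Neis_diag x : Neis M x x = 0.
Proof. by rewrite /Neis; move: (arc_ug_imp x x); rewrite ug_irr; case: (arc M x x). Qed.

Lemma Neis_eq0 x y : (Neis M x y == 0) = ~~ ug M x y.
Proof.
rewrite /Neis; move: (arc_ug_imp x y) (arc_ug_imp y x); rewrite (ug_sym x y).
by case: (arc M x y); case: (arc M y x); case: (ug M x y).
Qed.

Lemma Neis_edge_values x y : ug M x y -> Neis M x y \in edge_values.
Proof.
move=> xy; have := Neis_values x y; rewrite inE -[_ == 0]negbK Neis_eq0 xy.
by move=> /orP[|//].
Qed.

Lemma Nentry_herm x y : Nentry M y x = (Nentry M x y)^*.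
Proof. by rewrite !NentryE Neis_sym eisC_conj. Qed.

Lemma Nentry_diag x : Nentry M x x = 0.
Proof. by rewrite NentryE Neis_diag rmorph0. Qed.

Lemma Nentry_eq0 x y : (Nentry M x y == 0) = ~~ ug M x y.
Proof. by rewrite NentryE -(rmorph0 eisC) eisC_eq Neis_eq0. Qed.

End Entries.

Lemma all_localP P : all_local P -> forall u p q fx fy,
  local_graph u p q -> fx \in T6_eis -> fy \in T6_eis -> P u p q fx fy.
Proof.
move=> hP u p q fx fy g fxT fyT; have inb (b : bool) : b \in bools by case: b.
by move: hP => /allP/(_ u (inb u))/allP/(_ p (inb p))/allP/(_ q (inb q))
  /allP/(_ fx fxT)/allP/(_ fy fyT)/implyP/(_ g).
Qed.

Lemma switching_certificate : all_local (fun u p q fx fy =>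
  local_admissible u p q fx fy ==> local_admissible u q p fy fx ==>
  let p' := local_switched_arc u p q fx fy in let q' := local_switched_arc u q p fy fx in
  (entry_eis u p' q' == eis_conj fx * fy * entry_eis u p q) && ~~ (p' && q')).
Proof. by vm_compute. Qed.

Lemma admissible_certificate : all_local (fun u p q fx fy =>
  (eis_conj fx * fy * entry_eis u p q \in entry_values) ==> local_admissible u p q fx fy).
Proof. by vm_compute. Qed.

Lemma Nentry_values n (M : mixed_graph n) x y : Nentry M x y \in map eisC entry_values.
Proof. by rewrite NentryE map_f ?Neis_values. Qed.

Section Switching.
Variables (n : nat) (M : mixed_graph n).
Hypothesis wf : mixed_wf M.
Local Notation N := (Nentry M).

Lemma admissible_local f x y tx ty : admissible M f -> f x = eisC tx -> f y = eisC ty ->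
  local_admissible (ug M x y) (arc M x y) (arc M y x) tx ty.
Proof.
case=> _ hu ha fx fy; apply/andP; split; apply/implyP => h.
- by have := hu x y h; rewrite fx fy -eisC_omega -!rmorphM !eisC_eq.
- by have := ha x y h; rewrite fx fy -eisC_omegab -eisC_omega -rmorphN -!rmorphM !eisC_eq.
Qed.

Lemma switched_arc_local f x y tx ty : f x = eisC tx -> f y = eisC ty ->
  switched_arc M f x y = local_switched_arc (ug M x y) (arc M x y) (arc M y x) tx ty.
Proof.
move=> fx fy; rewrite /switched_arc /local_switched_arc fx fy.
by rewrite -eisC_omega -rmorphN -!rmorphM !eisC_eq.
Qed.

Lemma admissible_of_values f : (forall x, f x \in T6) ->
  (forall x y, (f x)^* * f y * N x y \in map eisC entry_values) -> admissible M f.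
Proof.
move=> fT hV.
have loc x y tx ty : f x = eisC tx -> f y = eisC ty -> tx \in T6_eis -> ty \in T6_eis ->
    local_admissible (ug M x y) (arc M x y) (arc M y x) tx ty.
  move=> fx fy txT tyT; apply: (implyP (all_localP admissible_certificate _ txT tyT)).
    exact: local_graph_of.
  by have /mapP[e eE] := hV x y; rewrite NentryE /Neis fx fy -eisC_conj -!rmorphM => /eisC_inj ->.
split=> // x y h; have [tx txT fx] := T6_eisP (fT x); have [ty tyT fy] := T6_eisP (fT y);
  have /andP[hu ha] := loc x y tx ty fx fy txT tyT.
- by move/implyP/(_ h): hu; rewrite fx fy -eisC_omega -!rmorphM !eisC_eq.
- by move/implyP/(_ h): ha; rewrite fx fy -eisC_omegab -eisC_omega -rmorphN -!rmorphM !eisC_eq.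
Qed.

Variables (f : 'I_n -> algC) (M' : mixed_graph n).
Hypotheses (adm : admissible M f)
  (hM : forall x y, ug M' x y = ug M x y /\ arc M' x y = switched_arc M f x y).

Lemma switched_Nentry x y :
  Nentry M' x y = (f x)^* * f y * N x y /\ ~~ (arc M' x y && arc M' y x).
Proof.
have [fT _ _] := adm; have [tx txT fx] := T6_eisP (fT x); have [ty tyT fy] := T6_eisP (fT y).
have ax : arc M' x y = local_switched_arc (ug M x y) (arc M x y) (arc M y x) tx ty.
  by rewrite (proj2 (hM x y)) (switched_arc_local fx fy).
have ay : arc M' y x = local_switched_arc (ug M x y) (arc M y x) (arc M x y) ty tx.
  by rewrite (proj2 (hM y x)) (switched_arc_local fy fx) (ug_sym wf x y).
have := all_localP switching_certificate (local_graph_of wf x y) txT tyT.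
have := admissible_local adm fy fx; rewrite (ug_sym wf x y) => ->.
rewrite (admissible_local adm fx fy) //= -ax -ay => /andP[/eqP e ->]; split=> //.
by rewrite !NentryE /Neis (proj1 (hM x y)) e !rmorphM /= eisC_conj fx fy.
Qed.

Lemma switched_wf : mixed_wf M'.
Proof.
split=> [x y | x | x y | x y]; rewrite ?(proj1 (hM _ _)).
- exact: ug_sym.
- exact: ug_irr.
- rewrite (proj2 (hM x y)) /switched_arc /uedge.
  by case/or3P=> [/andP[/and3P[]] | /andP[/(arc_ug wf)] | /andP[/(arc_ug wf)]] //; rewrite ug_sym.
- exact: (proj2 (switched_Nentry x y)).
Qed.

End Switching.

(** * Switching equivalence and twins *)

Definition conj_if (b : bool) (z : algC) : algC := if b then z^* else z.

Lemma conj_ifM b x y : conj_if b (x * y) = conj_if b x * conj_if b y.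
Proof. by case: b => //=; rewrite rmorphM. Qed.

Lemma conj_if_conj b x : conj_if b x^* = (conj_if b x)^*.
Proof. by case: b. Qed.

Lemma conj_ifK b1 b2 x : conj_if b2 (conj_if b1 x) = conj_if (b1 (+) b2) x.
Proof. by case: b1; case: b2 => //=; rewrite conjCK. Qed.

Lemma conj_if_T6 b x : x \in T6 -> conj_if b x \in T6.
Proof. by case: b => //; apply: T6_conj. Qed.

Definition T6_congruent n (M M' : mixed_graph n) : Prop :=
  exists2 d : 'I_n -> algC, (forall x, d x \in T6) &
    exists b, forall x y, Nentry M' x y = (d x)^* * d y * conj_if b (Nentry M x y).

Lemma T6_congruent_refl n (M : mixed_graph n) : T6_congruent M M.
Proof.
by exists (fun=> 1) => [_|]; [exact: one_T6 | exists false => x y; rewrite rmorph1 !mul1r].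
Qed.

Lemma T6_congruent_trans n (M1 M2 M3 : mixed_graph n) :
  T6_congruent M1 M2 -> T6_congruent M2 M3 -> T6_congruent M1 M3.
Proof.
move=> [d dT [b1 e1]] [e eT [b2 e2]].
exists (fun x => conj_if b2 (d x) * e x) => [x|]; first by rewrite T6_mul ?conj_if_T6.
exists (b1 (+) b2) => x y; rewrite e2 e1 !conj_ifM !conj_if_conj -conj_ifK rmorphM /=; ring.
Qed.

Lemma switch_step_congruent n (M M' : mixed_graph n) :
  mixed_wf M -> switch_step M M' -> mixed_wf M' /\ T6_congruent M M'.
Proof.
move=> wf [[f [adm hM]] | hM].
  split; first exact: switched_wf adm hM.
  have [fT _ _] := adm; exists f => //; exists false => x y.
  exact: (proj1 (switched_Nentry wf adm hM x y)).
split.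
  split=> [x y | x | x y | x y]; rewrite ?(proj1 (hM _ _)) ?(proj2 (hM _ _)).
  - exact: ug_sym.
  - exact: ug_irr.
  - by move/(arc_ug wf); rewrite ug_sym.
  - by rewrite andbC arc_asym.
exists (fun=> 1) => [_|]; first exact: one_T6.
exists true => x y /=; rewrite rmorph1 !mul1r -(Nentry_herm wf).
by rewrite /Nentry !(proj2 (hM _ _)) (proj1 (hM _ _)) (ug_sym wf).
Qed.

Lemma switch_equiv_congruent n (M M' : mixed_graph n) :
  mixed_wf M -> switch_equiv M M' -> mixed_wf M' /\ T6_congruent M M'.
Proof.
move=> wf h; elim: h wf => {M M'} [M M' st wf | M wf | M1 M2 M3 _ IH12 _ IH23 wf].
- exact: switch_step_congruent.
- by split=> //; apply: T6_congruent_refl.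
- have [wf2 c12] := IH12 wf; have [wf3 c23] := IH23 wf2.
  by split=> //; apply: T6_congruent_trans c12 c23.
Qed.

Section Twins.
Variables (n : nat) (M : mixed_graph n).
Hypothesis wf : mixed_wf M.
Local Notation N := (Nentry M).

Lemma twins_rows u v : twins M u v -> exists2 l, l \in T6 & forall j, N u j = l * N v j.
Proof.
move=> [M' [uv hj]]; have [_ [d dT [b hN]]] := switch_equiv_congruent wf uv.
exists (conj_if b (d u * (d v)^*)) => [|j]; first by rewrite conj_if_T6 ?T6_mul ?T6_conj.
have := hj j; rewrite !hN -!(mulrC (d j)) -!mulrA => /(mulfI (T6_neq0 (dT j))) e.
have : conj_if b (N u j) = d u * (d v)^* * conj_if b (N v j).
  by rewrite -mulrA -e mulrA T6_mul_conj // mul1r.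
by move/(congr1 (conj_if b)); rewrite conj_ifM !conj_ifK addbb.
Qed.

Lemma rows_twins u v l : l \in T6 -> (forall j, N u j = l * N v j) -> twins M u v.
Proof.
move=> lT huv; pose f z := if z == u then l else 1.
have fT z : f z \in T6 by rewrite /f; case: eqP => _; [exact: lT | exact: one_T6].
have fu y : (f u)^* * f y * N u y = f y * N v y.
  have -> : f u = l by rewrite /f eqxx.
  by rewrite huv mulrAC mulrA T6_conj_mul // mul1r mulrC.
have adm : admissible M f.
  apply: admissible_of_values => // x y; have Ne x' y' := Nentry_values M x' y'.
  case: (eqVneq x u) => [->|xu]; first rewrite fu.
    by case: (eqVneq y u) => [->|yu]; rewrite /f ?eqxx ?(negPf yu) ?mul1r // -huv.
  rewrite /f (negPf xu) rmorph1 mul1r; case: (eqVneq y u) => [->|yu]; last by rewrite mul1r.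
  rewrite (Nentry_herm wf u) huv rmorphM /= -(Nentry_herm wf v) mulrA T6_mul_conj //.
  by rewrite mul1r.
pose M' := MixedGraph (ug M) (switched_arc M f).
have hM x y : ug M' x y = ug M x y /\ arc M' x y = switched_arc M f x y by [].
exists M'; split; first by apply: rt_step; left; exists f.
case: (eqVneq v u) => [-> //|vu] j.
by rewrite !(proj1 (switched_Nentry wf adm hM _ _)) fu /f (negPf vu) rmorph1 mul1r.
Qed.

Lemma twinsP u v : twins M u v <-> exists2 l, l \in T6 & forall j, N u j = l * N v j.
Proof. by split=> [/twins_rows | [l lT /(rows_twins lT)]]. Qed.

Lemma col_scale u v l : l \in T6 -> (forall j, N v j = l * N u j) -> forall i, N i v = l^* * N i u.
Proof. by move=> lT h i; rewrite (Nentry_herm wf v) h rmorphM /= -(Nentry_herm wf u). Qed.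

End Twins.

(** * Rank of Hermitian matrices *)

Definition row_span3 (R : nzRingType) (T : Type) (A : T -> T -> R) (a b c : T) : Prop :=
  forall v, exists x : nat -> R, forall w, A v w = sum3 (fun i => x i * A (tri a b c i) w).

Lemma eq_row_span3 (R : nzRingType) (T : Type) (A B : T -> T -> R) a b c :
  A =2 B -> row_span3 A a b c -> row_span3 B a b c.
Proof. by move=> AB span v; have [x hx] := span v; exists x => w; rewrite -AB hx /sum3 !AB. Qed.

Section Rank.
Variable F : fieldType.

Lemma rank_principal_submx k n (A : 'M[F]_n) (f : 'I_k -> 'I_n) :
  (A <= rowsub f A)%MS -> colsub f (rowsub f A) \in unitmx -> \rank A = k.
Proof.
move=> sA uB; apply/eqP; rewrite eqn_leq (leq_trans (mxrankS sA) (rank_leq_row _)) /=.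
rewrite -{1}(mxrank_unit uB).
have -> : colsub f (rowsub f A) = rowsub f A *m colsub f 1%:M by rewrite mulmx_colsub mulmx1.
exact: leq_trans (mxrankM_maxl _ _) (mxrankS (rowsub_sub f A)).
Qed.

Lemma row_span3P n (A : 'M[F]_n) a b c :
  (A <= rowsub (fun i : 'I_3 => tri a b c i) A)%MS <-> row_span3 A a b c.
Proof.
split=> [sA v | span].
- have /submxP[D hD] := row_subP sA v; exists (fun i => D 0 (inord i)) => w.
  have := congr1 (fun B : 'rV_n => B 0 w) hD; rewrite !mxE => ->.
  by rewrite -sum_ord3; apply: eq_bigr => j _; rewrite inord_val mxE.
- apply/row_subP => v; have [x hx] := span v; apply/submxP.
  exists (\row_(i < 3) x i); apply/rowP => w.
  by rewrite !mxE hx -sum_ord3; apply: eq_bigr => j _; rewrite !mxE.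
Qed.

End Rank.

(* Hermitian symmetry turns the independent rows [f] into independent columns. *)
Lemma hermitian_principal_basis (C : numClosedFieldType) n (A : 'M[C]_n) :
  (forall i j, A j i = (A i j)^*) ->
  exists f : 'I_(\rank A) -> 'I_n, (A <= rowsub f A)%MS /\ colsub f (rowsub f A) \in unitmx.
Proof.
move=> herm; pose f := maxrankfun A; exists f.
have /submxP[X hX] : (A <= rowsub f A)%MS by rewrite eq_maxrowsub.
split; first by rewrite eq_maxrowsub.
rewrite -row_free_unit -row_leq_rank.
have rkC : \rank (colsub f A) = \rank A.
  have -> : colsub f A = (map_mx Num.conj (rowsub f A))^T.
    by apply/matrixP => i j; rewrite !mxE herm.
  by rewrite mxrank_tr mxrank_map; apply/eqP; exact: maxrowsub_free.
apply: leq_trans (eq_leq (esym rkC)) _.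
by rewrite [colsub f A](_ : _ = X *m colsub f (rowsub f A)) ?mxrankM_maxr // mulmx_colsub -hX.
Qed.

Lemma rank3P (C : numClosedFieldType) n (A : 'M[C]_n) : (forall i j, A j i = (A i j)^*) ->
  \rank A = 3%N <->
  exists a b c, row_span3 A a b c /\ det3 (fun i j => A (tri a b c i) (tri a b c j)) != 0.
Proof.
move=> herm; split=> [rk | [a [b [c [span hD]]]]].
- have := hermitian_principal_basis herm; rewrite rk => -[f [sA uB]].
  have ft : f =1 (fun i : 'I_3 => tri (f 0) (f 1) (f 2) i).
    by case=> [[|[|[|//]]] Hi] /=; congr f; apply/val_inj.
  exists (f 0), (f 1), (f 2); split; first by apply/row_span3P; rewrite -(eq_rowsub _ ft A).
  move: uB; rewrite unitmxE unitfE -det_mx33.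
  suff -> : colsub f (rowsub f A) =
    \matrix_(i < 3, j < 3) A (tri (f 0) (f 1) (f 2) i) (tri (f 0) (f 1) (f 2) j) by [].
  by apply/matrixP => i j; rewrite !mxE -!ft.
- apply: (@rank_principal_submx _ _ _ A (fun i : 'I_3 => tri a b c i)); first exact/row_span3P.
  suff -> : colsub (fun i : 'I_3 => tri a b c i) (rowsub (fun i : 'I_3 => tri a b c i) A) =
    \matrix_(i < 3, j < 3) A (tri a b c i) (tri a b c j).
    by rewrite unitmxE unitfE (det_mx33 (fun i j => A (tri a b c i) (tri a b c j))).
  by apply/matrixP => i j; rewrite !mxE.
Qed.

(** * Finite certificates *)

Definition herm_block (x y z : eis) (i j : nat) : eis :=
  tri (tri 0 x y j) (tri (eis_conj x) 0 z j) (tri (eis_conj y) (eis_conj z) 0 j) i.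

Definition all3 (s : seq eis) (P : eis -> eis -> eis -> bool) : bool :=
  all (fun x => all (fun y => all (fun z => P x y z) s) s) s.

Lemma all3P s P : all3 s P -> forall x y z, x \in s -> y \in s -> z \in s -> P x y z.
Proof. by move=> hP x y z xs ys zs; move: hP => /allP/(_ x xs)/allP/(_ y ys)/allP/(_ z zs). Qed.

Lemma mem_iota3 k : (k \in iota 0 3) = (k < 3)%N.
Proof. by rewrite mem_iota leq0n add0n. Qed.

Definition triples (s : seq eis) : seq (eis * eis * eis) :=
  [seq (p, z) | p <- [seq (x, y) | x <- s, y <- s], z <- s].

Definition tri3 (r : eis * eis * eis) : nat -> eis := tri r.1.1 r.1.2 r.2.

Lemma triplesP s x y z : x \in s -> y \in s -> z \in s -> (x, y, z) \in triples s.
Proof. by move=> xs ys zs; rewrite allpairs_f ?allpairs_f. Qed.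

Section Certificates.
Implicit Types (h K : nat -> nat -> eis) (r s : nat -> eis).

Definition border h r (p q : nat) : eis :=
  if (p < 3)%N then (if (q < 3)%N then h p q else eis_conj (r p))
  else (if (q < 3)%N then r q else 0).

Definition hform h r s : eis := form3 h r (fun i => eis_conj (s i)).

Definition scaled_by_T6 r s : bool :=
  has (fun l => all (fun k => r k == l * s k) (iota 0 3)) T6_eis.

Definition weight4 K (p q r s : nat) : eis := K p q * K q r * K r s * K s p.

Definition K4_signature K : bool :=
  let ws := [:: weight4 K 0 1 2 3; weight4 K 0 1 3 2; weight4 K 0 2 1 3] in
  (count (eq_op^~ 1) ws == 2%N) &&
  (count (fun w => (w == - eis_omega) || (w == - eis_omegab)) ws == 1%N).

Definition new_isotropic_row h r : bool :=
  [&& ~~ all (fun k => r k == 0) (iota 0 3), hform h r r == 0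
    & ~~ has (fun i => scaled_by_T6 r (h i)) (iota 0 3)].

Definition K4_row h r : bool :=
  [&& r 0%N != 0, r 1%N != 0, r 2%N != 0 & K4_signature (border h r)].

(* Rows r, s of vertices v, w satisfy det3 h * N v w = hform h r s. *)
Definition same_or_incompatible h r s : bool :=
  scaled_by_T6 r s || (hform h r s \notin map ( *%R (det3 h)) entry_values).

Definition new_isotropic_rows h : seq (eis * eis * eis) :=
  [seq t <- triples entry_values | new_isotropic_row h (tri3 t)].

Definition new_rows_K4_unique h : bool :=
  all (fun t => K4_row h (tri3 t) &&
                all (fun t' => same_or_incompatible h (tri3 t) (tri3 t')) (new_isotropic_rows h))
      (new_isotropic_rows h).

Lemma forward_certificate : all3 entry_values (fun x y z =>
  (det3 (herm_block x y z) != 0) ==>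
  [&& x != 0, y != 0, z != 0 & new_rows_K4_unique (herm_block x y z)]).
Proof. by vm_compute. Qed.

Definition K4_rows_isotropic h : bool :=
  all3 edge_values (fun x y z =>
    K4_signature (border h (tri x y z)) ==> (hform h (tri x y z) (tri x y z) == 0)).

Lemma backward_certificate : all3 edge_values (fun x y z =>
  (det3 (herm_block x y z) != 0) && K4_rows_isotropic (herm_block x y z)).
Proof. by vm_compute. Qed.

End Certificates.

Definition quad (T : Type) (a b c d : T) (i : nat) : T := if (i < 3)%N then tri a b c i else d.

Definition block n (M : mixed_graph n) (a b c : 'I_n) : nat -> nat -> eis :=
  herm_block (Neis M a b) (Neis M a c) (Neis M b c).

Definition row3 n (M : mixed_graph n) (a b c v : 'I_n) : nat -> eis :=
  tri (Neis M v a) (Neis M v b) (Neis M v c).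

Lemma positive_w_eisC w : positive_w (eisC w) = (w == 1).
Proof. by rewrite /positive_w -(rmorph1 eisC) eisC_eq. Qed.

Lemma seminegative_w_eisC w : seminegative_w (eisC w) = (w == - eis_omega) || (w == - eis_omegab).
Proof. by rewrite /seminegative_w -eisC_omega -eisC_omegab -!rmorphN !eisC_eq. Qed.

Section Block.
Variables (n : nat) (M : mixed_graph n) (a b c : 'I_n).
Local Notation t := (tri a b c).

Lemma row3_entry v i : Neis M v (t i) = row3 M a b c v i.
Proof. by case: i => [|[|i]]. Qed.

Hypothesis wf : mixed_wf M.

Lemma block_entry i j : Neis M (t i) (t j) = block M a b c i j.
Proof. by case: i => [|[|i]]; case: j => [|[|j]]; rewrite /= ?Neis_diag // (Neis_sym wf). Qed.

Lemma Nentry_block i j : Nentry M (t i) (t j) = eisC (block M a b c i j).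
Proof. by rewrite NentryE block_entry. Qed.

Lemma det_block : det3 (fun i j => Nentry M (t i) (t j)) = eisC (det3 (block M a b c)).
Proof. by rewrite rmorph_det3; apply: eq_det3 => i j; rewrite Nentry_block. Qed.

Lemma border_entry d p q :
  Neis M (quad a b c d p) (quad a b c d q) = border (block M a b c) (row3 M a b c d) p q.
Proof.
rewrite /quad /border; case: ltnP => _; case: ltnP => _.
- exact: block_entry.
- by rewrite (Neis_sym wf) row3_entry.
- exact: row3_entry.
- exact: Neis_diag.
Qed.

Lemma K4_signature_cycles d :
  K4_signature (border (block M a b c) (row3 M a b c d)) =
  let ws := [:: cycle4_weight M a b c d; cycle4_weight M a b d c; cycle4_weight M a c b d] in
  (count positive_w ws == 2%N) && (count seminegative_w ws == 1%N).
Proof.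
have W p q r s : cycle4_weight M (quad a b c d p) (quad a b c d q) (quad a b c d r) (quad a b c d s)
    = eisC (weight4 (border (block M a b c) (row3 M a b c d)) p q r s).
  by rewrite /cycle4_weight /weight4 !NentryE !border_entry !rmorphM.
rewrite (W 0 1 2 3)%N (W 0 1 3 2)%N (W 0 2 1 3)%N /=.
by rewrite !positive_w_eisC !seminegative_w_eisC.
Qed.

End Block.

Lemma Nmx_rank3P n (M : mixed_graph n) : mixed_wf M ->
  \rank (Nmx M) = 3%N <-> exists a b c, row_span3 (Nentry M) a b c /\ det3 (block M a b c) != 0.
Proof.
move=> wf; have NmxE : Nmx M =2 Nentry M by move=> i j; rewrite mxE.
have detE a b c : det3 (fun i j => Nmx M (tri a b c i) (tri a b c j)) = eisC (det3 (block M a b c)).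
  by rewrite -det_block //; apply: eq_det3 => i j; rewrite NmxE.
rewrite rank3P => [|i j]; last by rewrite !NmxE Nentry_herm.
split=> -[a [b [c [span hD]]]]; exists a, b, c.
- by move: hD; rewrite detE eisC_eq0; split=> //; apply: eq_row_span3 span.
- by rewrite detE eisC_eq0; split=> //; apply: eq_row_span3 span => i j; rewrite NmxE.
Qed.

(** * Representatives of twin classes *)

Section Representatives.
Variables (n : nat) (M : mixed_graph n).
Hypothesis wf : mixed_wf M.
Variable S : {set 'I_n}.
Hypothesis reps : twin_reps M S.
Local Notation N := (Nentry M).

Lemma rep_row v : exists2 u, u \in S & exists2 l, l \in T6 & forall j, N v j = l * N u j.
Proof.
have [u uS /(twinsP wf)[l lT hl]] := reps.1 v; exists u => //.
exists l^*; first exact: T6_conj.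
by move=> j; rewrite hl mulrA T6_conj_mul // mul1r.
Qed.

Lemma reps_eq u v l : u \in S -> v \in S -> l \in T6 -> (forall j, N u j = l * N v j) -> u = v.
Proof. by move=> uS vS lT h; apply: reps.2 => //; apply/(twinsP wf); exists l. Qed.

Lemma row_span3_of_reps a b c :
  (forall u, u \in S -> exists x : nat -> algC,
     forall w, w \in S -> N u w = sum3 (fun i => x i * N (tri a b c i) w)) ->
  row_span3 N a b c.
Proof.
move=> hS v; have [u uS [l lT hv]] := rep_row v; have [x hx] := hS u uS.
exists (fun i => l * x i) => w; have [w' w'S [m mT hw]] := rep_row w.
rewrite hv (col_scale wf mT hw) hx // /sum3 /= !(col_scale wf mT hw); ring.
Qed.

Lemma basis_in_reps a b c : row_span3 N a b c -> det3 (block M a b c) != 0 ->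
  exists a' b' c', [/\ a' \in S, b' \in S, c' \in S, row_span3 N a' b' c'
                     & det3 (block M a' b' c') != 0].
Proof.
move=> span hD.
have [a' a'S [la laT ha]] := rep_row a; have [b' b'S [lb lbT hb]] := rep_row b.
have [c' c'S [lc lcT hc]] := rep_row c.
pose l := tri la lb lc; have lT i : l i \in T6 by case: i => [|[|i]].
have hl i j : N (tri a b c i) j = l i * N (tri a' b' c' i) j by case: i => [|[|i]].
exists a', b', c'; split=> //.
  move=> v; have [x hx] := span v; exists (fun i => x i * l i) => w.
  by rewrite hx /sum3 !hl !mulrA.
move: hD; rewrite -!eisC_eq0 -!det_block //.
rewrite (@eq_det3 _ _ (fun i j => l i * (l j)^* * N (tri a' b' c' i) (tri a' b' c' j))).
  rewrite det3_scale /=; have -> : forall x y z : algC, x * y * z * (x^* * y^* * z^*) =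
    (x * x^*) * (y * y^*) * (z * z^*) by move=> x y z; ring.
  by rewrite !T6_mul_conj ?mul1r.
by move=> i j; rewrite hl (col_scale wf (lT j) (hl j)) mulrA.
Qed.

End Representatives.

Lemma card_set3 (T : finType) (a b c : T) : #|[set a; b; c]| = 3%N <-> uniq [:: a; b; c].
Proof.
have -> : #|[set a; b; c]| = #|[:: a; b; c]| by apply: eq_card => x; rewrite !inE -!orbA.
exact: (rwP (@card_uniqP _ [:: a; b; c])).
Qed.

Lemma card_set4 (T : finType) (a b c d : T) : #|[set a; b; c; d]| = 4%N <-> uniq [:: a; b; c; d].
Proof.
have -> : #|[set a; b; c; d]| = #|[:: a; b; c; d]| by apply: eq_card => x; rewrite !inE -!orbA.
exact: (rwP (@card_uniqP _ [:: a; b; c; d])).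
Qed.

Lemma card3_set (T : finType) (A : {set T}) : #|A| = 3%N -> exists a b c, A = [set a; b; c].
Proof.
rewrite -{2}(set_enum A) cardE; case: (enum A) => [|a [|b [|c [|? ?]]]] // _.
by exists a, b, c; apply/setP => x; rewrite !inE -!orbA.
Qed.

Lemma connected_neighbor n (M : mixed_graph n) x y :
  mixed_connected M -> x != y -> exists z, ug M x z.
Proof.
move=> conn xy; have /connectP[[|z p] /= hp hl] := conn x y; last by exists z; case/andP: hp.
by move: xy; rewrite hl eqxx.
Qed.

Section Forward.
Variables (n : nat) (M : mixed_graph n).
Hypotheses (wf : mixed_wf M) (conn : mixed_connected M).
Variable S : {set 'I_n}.
Hypothesis reps : twin_reps M S.
Variables a b c : 'I_n.
Hypotheses (aS : a \in S) (bS : b \in S) (cS : c \in S).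
Hypothesis span : row_span3 (Nentry M) a b c.
Hypothesis hD : det3 (block M a b c) != 0.
Local Notation N := (Nentry M).
Local Notation t := (tri a b c).
Local Notation h := (block M a b c).
Local Notation r := (row3 M a b c).

Lemma Nentry_hform v w : eisC (det3 h) * N v w = eisC (hform h (r v) (r w)).
Proof.
have [x hx] := span v; rewrite /hform rmorph_form3 -det_block //.
rewrite (@eq_form3 _ _ (fun i j => N (t i) (t j)) _ (fun i => N v (t i)) _ (fun i => N (t i) w)).
- by rewrite (form3_comb (x := x)) -?hx // => k; rewrite hx.
- by move=> i j /=; rewrite Nentry_block.
- by move=> i /=; rewrite NentryE row3_entry.
- by move=> i /=; rewrite eisC_conj -row3_entry -NentryE -Nentry_herm.
Qed.

Lemma Nentry_row3_scale v u e : (forall k, (k < 3)%N -> r v k = e * r u k) ->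
  forall w, N v w = eisC e * N u w.
Proof.
move=> hvu w; have hD' : eisC (det3 h) != 0 by rewrite eisC_eq0.
apply: (mulfI hD'); rewrite mulrCA !Nentry_hform -rmorphM; congr eisC.
exact: form3_scalel.
Qed.

Lemma forward_certificate_block : [&& Neis M a b != 0, Neis M a c != 0, Neis M b c != 0 & new_rows_K4_unique h].
Proof.
have /implyP := all3P forward_certificate
  (Neis_values M a b) (Neis_values M a c) (Neis_values M b c).
exact.
Qed.

Lemma forward_block_edges : [&& ug M a b, ug M a c & ug M b c].
Proof. by case/and4P: forward_certificate_block; rewrite !(Neis_eq0 wf) !negbK => -> -> ->. Qed.

Lemma forward_new_row v w : new_isotropic_row h (r v) ->
  K4_row h (r v) /\ (new_isotropic_row h (r w) -> same_or_incompatible h (r v) (r w)).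
Proof.
move=> ev; have /and4P[_ _ _ /allP hE] := forward_certificate_block.
have inE' u : new_isotropic_row h (r u) ->
    (Neis M u a, Neis M u b, Neis M u c) \in new_isotropic_rows h.
  by move=> eu; rewrite mem_filter eu triplesP ?Neis_values.
have /andP[ok /allP pairs] := hE _ (inE' v ev); split=> // ew'.
exact: pairs _ (inE' w ew').
Qed.

Lemma new_isotropic_rowP v : v \in S -> v != a -> v != b -> v != c -> new_isotropic_row h (r v).
Proof.
move=> vS va vb vc; apply/and3P; split.
- apply/negP => /allP r0; have [z vz] := connected_neighbor conn va.
  have : N v z = eisC 0 * N v z.
    by apply: Nentry_row3_scale => k k3; rewrite mul0r; apply/eqP/r0; rewrite mem_iota3.
  by rewrite rmorph0 mul0r => /eqP; rewrite Nentry_eq0 // vz.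
- by rewrite -eisC_eq0 -Nentry_hform Nentry_diag // mulr0.
- apply/hasPn => i; rewrite mem_iota3 => i3; apply/negP => /hasP[l lT /allP hl].
  have hvt : forall w, N v w = eisC l * N (t i) w.
    apply: Nentry_row3_scale => k k3; rewrite -(row3_entry M a b c (t i) k) block_entry //.
    by apply/eqP/hl; rewrite mem_iota3.
  have := fun tS : t i \in S => reps_eq wf reps vS tS (eisC_T6 lT) hvt.
  clear hl hvt; case: i i3 => [|[|[|]]] // _ /=.
  + by move/(_ aS)/eqP; rewrite (negPf va).
  + by move/(_ bS)/eqP; rewrite (negPf vb).
  + by move/(_ cS)/eqP; rewrite (negPf vc).
Qed.

Lemma new_isotropic_row_unique v w : v \in S -> w \in S ->
  new_isotropic_row h (r v) -> new_isotropic_row h (r w) -> v = w.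
Proof.
move=> vS wS ev ew'; have [_ /(_ ew')] := forward_new_row w ev; case/orP.
- case/hasP=> l lT /allP hl; apply: (reps_eq wf reps vS wS (eisC_T6 lT)).
  by apply: Nentry_row3_scale => k k3; apply/eqP/hl; rewrite mem_iota3.
- have -> : hform h (r v) (r w) = det3 h * Neis M v w.
    by apply: eisC_inj; rewrite -Nentry_hform rmorphM NentryE.
  by rewrite map_f ?Neis_values.
Qed.

Lemma forward_K4 v : v \in S -> v != a -> v != b -> v != c -> induced_K4_2pos_1semineg M S.
Proof.
move=> vS va vb vc; have ev := new_isotropic_rowP vS va vb vc.
have [/and4P[nva nvb nvc hK] _] := forward_new_row v ev.
have /and3P[ab ac bc] := forward_block_edges.
have [gva gvb gvc] : [/\ ug M v a, ug M v b & ug M v c].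
  by split; rewrite -[ug _ _ _]negbK -(Neis_eq0 wf).
have hS : S = [set a; b; c; v].
  apply/setP => x; rewrite !inE -!orbA; apply/idP/idP => [xS | /or4P[]/eqP-> //].
  case: eqP => // /eqP xa; case: eqP => // /eqP xb; case: eqP => // /eqP xc.
  by rewrite (new_isotropic_row_unique xS vS (new_isotropic_rowP xS xa xb xc) ev) eqxx.
split; [|split].
- rewrite hS card_set4 /= !inE !negb_or (ug_neq wf ab) (ug_neq wf ac) (ug_neq wf bc).
  by rewrite ![_ == v]eq_sym va vb vc.
- move=> x y; rewrite hS !inE -!orbA => /or4P[]/eqP-> /or4P[]/eqP->; rewrite ?eqxx // => _;
    by rewrite // (ug_sym wf).
- exists a, b, c, v; split=> //.
  by move: hK; rewrite K4_signature_cycles // => /andP[/eqP c1 /eqP c2]; split.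
Qed.

Lemma forward_triangle : (forall v, v \in S -> [|| v == a, v == b | v == c]) ->
  induced_mixed_triangle M S.
Proof.
move=> hv; have /and3P[ab ac bc] := forward_block_edges.
have hS : S = [set a; b; c].
  by apply/setP => x; rewrite !inE -!orbA; apply/idP/idP => [/hv | /or3P[]/eqP->].
split; first by rewrite hS card_set3 /= !inE !negb_or (ug_neq wf ab) (ug_neq wf ac) (ug_neq wf bc).
move=> x y; rewrite hS !inE -!orbA => /or3P[]/eqP-> /or3P[]/eqP->; rewrite ?eqxx // => _;
  by rewrite // (ug_sym wf).
Qed.

Lemma forward_triangle_or_K4 : induced_mixed_triangle M S \/ induced_K4_2pos_1semineg M S.
Proof.
case: (pickP [pred v | [&& v \in S, v != a, v != b & v != c]]) => [v | none].
  by case/and4P=> vS va vb vc; right; apply: forward_K4 vS va vb vc.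
left; apply: forward_triangle => v vS; have /negbT := none v.
by rewrite /= vS !negb_and !negbK.
Qed.

End Forward.

Definition unit3 (i k : nat) : algC := if k == i then 1 else 0.

Section Backward.
Variables (n : nat) (M : mixed_graph n).
Hypothesis wf : mixed_wf M.
Variable S : {set 'I_n}.
Hypothesis reps : twin_reps M S.
Local Notation N := (Nentry M).

Lemma sum3_unit3 a b c i w : (i < 3)%N ->
  sum3 (fun k => unit3 i k * N (tri a b c k) w) = N (tri a b c i) w.
Proof. by case: i => [|[|[|]]] // _; rewrite /sum3 /unit3 /= !mul1r !mul0r ?addr0 ?add0r. Qed.

Lemma isotropic_row_comb a b c d :
  det3 (block M a b c) != 0 -> hform (block M a b c) (row3 M a b c d) (row3 M a b c d) = 0 ->
  exists x, forall w, w \in [:: a; b; c; d] -> N d w = sum3 (fun i => x i * N (tri a b c i) w).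
Proof.
move=> hD hd0; pose H i j := N (tri a b c i) (tri a b c j).
have HD : det3 H != 0 by rewrite /H det_block // eisC_eq0.
exists (cramer3 H (fun i => N d (tri a b c i))) => w; rewrite !inE.
case/or4P=> /eqP->.
- exact: esym (@cramer3_comb _ H _ 0%N HD isT).
- exact: esym (@cramer3_comb _ H _ 1%N HD isT).
- exact: esym (@cramer3_comb _ H _ 2%N HD isT).
set x := cramer3 H _; rewrite Nentry_diag //.
have -> : sum3 (fun i => x i * N (tri a b c i) d) = sum3 (fun i => x i * (N d (tri a b c i))^*).
  by rewrite /sum3 !(Nentry_herm wf d).
rewrite cramer3_form //.
suff -> : form3 H (fun i => N d (tri a b c i)) (fun i => (N d (tri a b c i))^*) = 0.
  by rewrite mul0r.
rewrite -(rmorph0 eisC) -hd0 /hform rmorph_form3; apply: eq_form3 => [i j | i | i] /=.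
- by rewrite /H Nentry_block.
- by rewrite NentryE row3_entry.
- by rewrite eisC_conj NentryE row3_entry.
Qed.

Lemma backward_triangle : induced_mixed_triangle M S ->
  exists a b c, row_span3 N a b c /\ det3 (block M a b c) != 0.
Proof.
case=> card3 adj; have [a [b [c hS]]] := card3_set card3.
move: card3; rewrite hS card_set3 /= !inE !negb_or => /and3P[/andP[ab ac] bc _].
have [aS bS cS] : [/\ a \in S, b \in S & c \in S] by rewrite hS !inE !eqxx ?orbT.
have := all3P backward_certificate (Neis_edge_values wf (adj _ _ aS bS ab))
  (Neis_edge_values wf (adj _ _ aS cS ac)) (Neis_edge_values wf (adj _ _ bS cS bc)).
case/andP=> hD _; exists a, b, c; split=> //.
apply: (row_span3_of_reps wf reps) => u; rewrite {1}hS !inE -!orbA.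
by case/or3P=> /eqP->; [exists (unit3 0) | exists (unit3 1) | exists (unit3 2)] => w _;
  rewrite sum3_unit3.
Qed.

Lemma backward_K4 : induced_K4_2pos_1semineg M S ->
  exists a b c, row_span3 N a b c /\ det3 (block M a b c) != 0.
Proof.
case=> card4 [adj [a [b [c [d [hS sign]]]]]].
move: card4; rewrite hS card_set4 /= !inE !negb_or.
case/and4P=> /and3P[ab ac ad] /andP[bc bd] cd _.
have [aS bS cS dS] : [/\ a \in S, b \in S, c \in S & d \in S] by rewrite hS !inE !eqxx ?orbT.
have := all3P backward_certificate (Neis_edge_values wf (adj _ _ aS bS ab))
  (Neis_edge_values wf (adj _ _ aS cS ac)) (Neis_edge_values wf (adj _ _ bS cS bc)).
case/andP=> hD /all3P hK.
have [da db dc] : [/\ d != a, d != b & d != c] by split; rewrite eq_sym.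
have hd0 : hform (block M a b c) (row3 M a b c d) (row3 M a b c d) = 0.
  apply/eqP; apply: (implyP (hK _ _ _ (Neis_edge_values wf (adj _ _ dS aS da))
    (Neis_edge_values wf (adj _ _ dS bS db)) (Neis_edge_values wf (adj _ _ dS cS dc)))).
  rewrite -/(block M a b c) -/(row3 M a b c d) K4_signature_cycles //.
  by case: sign => c1 c2; apply/andP; split; apply/eqP.
have [x hx] := isotropic_row_comb hD hd0.
exists a, b, c; split=> //; apply: (row_span3_of_reps wf reps) => u.
rewrite {1}hS !inE -!orbA => /or4P[]/eqP->.
- by exists (unit3 0) => w _; rewrite sum3_unit3.
- by exists (unit3 1) => w _; rewrite sum3_unit3.
- by exists (unit3 2) => w _; rewrite sum3_unit3.
- by exists x => w; rewrite hS => wS; apply: hx; move: wS; rewrite !inE -!orbA.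
Qed.

End Backward.

Theorem theorem5p14 (n : nat) (M : mixed_graph n) :
  mixed_wf M -> mixed_connected M ->
  forall S : {set 'I_n}, twin_reps M S ->
  (\rank (Nmx M) = 3%N <->
     induced_mixed_triangle M S \/ induced_K4_2pos_1semineg M S).
Proof.
move=> wf conn S reps; rewrite Nmx_rank3P //; split.
- case=> a [b [c [span hD]]].
  have [a' [b' [c' [aS bS cS span' hD']]]] := basis_in_reps wf reps span hD.
  exact: (forward_triangle_or_K4 wf conn reps aS bS cS span' hD').
- by case=> [/(backward_triangle wf reps) | /(backward_K4 wf reps)].
Qed.
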